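(* Let $0<\mu<1/2$ be such that for every $r>0$ the spiral $t\mapsto(r\cos t,r\sin t,\mu rt)$ is self-expanded, fix $r>0$ and let $\gamma(t)=(r\cos t,r\sin t,\mu rt)$, $t\in\mathbb{R}$. Let $\lambda=1/\sqrt5$ and $\alpha=\arccos(\lambda)$. Then for every $t\in\mathbb{R}$ the cone $C(t,\alpha)$ does not intersect the line $\{(0,0,z):z\in\mathbb{R}\}$.
   Context: $\mathbb{R}^3$ carries the Euclidean inner product $\langle\cdot,\cdot\rangle$ and norm $\|\cdot\|$. A curve is self-expanded if for all $t_1\le t_2\le t_3$: $\|\gamma(t_1)-\gamma(t_2)\|\le\|\gamma(t_1)-\gamma(t_3)\|$. For $v\in\mathbb{S}^2$ and $\alpha\in[0,\pi)$, $C(v,\alpha)=\{u:\langle u,v\rangle>\|u\|\cos\alpha\}\cup\{0\}$, and $C(t,\alpha)=\gamma(t)+C\big(\gamma'(t)/\|\gamma'(t)\|,\alpha\big)$. *)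

From Stdlib Require Export Reals Lra.
Open Scope R_scope.

Definition R3 : Type := (R * R * R)%type.
Definition vx (u : R3) : R := fst (fst u).
Definition vy (u : R3) : R := snd (fst u).
Definition vz (u : R3) : R := snd u.
Definition vsub (u v : R3) : R3 := (vx u - vx v, vy u - vy v, vz u - vz v).
Definition vscale (a : R) (u : R3) : R3 := (a * vx u, a * vy u, a * vz u).
Definition inner (u v : R3) : R := vx u * vx v + vy u * vy v + vz u * vz v.
Definition norm3 (u : R3) : R := sqrt (inner u u).
Definition zero3 : R3 := (0, 0, 0).

Definition self_expanded (g : R -> R3) : Prop :=
  forall t1 t2 t3 : R, t1 <= t2 -> t2 <= t3 ->
    norm3 (vsub (g t1) (g t2)) <= norm3 (vsub (g t1) (g t3)).

Definition has_deriv3 (g dg : R -> R3) : Prop :=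
  forall t : R,
    derivable_pt_lim (fun s => vx (g s)) t (vx (dg t)) /\
    derivable_pt_lim (fun s => vy (g s)) t (vy (dg t)) /\
    derivable_pt_lim (fun s => vz (g s)) t (vz (dg t)).

Definition in_cone (v : R3) (alpha : R) (u : R3) : Prop :=
  inner u v > norm3 u * cos alpha \/ u = zero3.

Definition in_cone_at (g dg : R -> R3) (t alpha : R) (x : R3) : Prop :=
  in_cone (vscale (/ norm3 (dg t)) (dg t)) alpha (vsub x (g t)).

Definition spiral (mu r : R) (t : R) : R3 := (r * cos t, r * sin t, mu * r * t).

(* Seen from gamma(t), the axis point (0,0,z) lies at horizontal distance r and height
   w = z - mu r t, while the unit tangent has slope mu / sqrt(1 + mu^2) in the vertical
   direction only.  Hence the cosine of the angle between the two directions is at most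
   |mu| / sqrt(1 + mu^2), which is <= 1 / sqrt 5 = cos alpha exactly when mu^2 <= 1/4. *)
From Stdlib Require Import Reals Lra Psatz.

Lemma spiral_derivative_eq (mu r : R) (dg : R -> R3) :
  has_deriv3 (spiral mu r) dg ->
  forall t, dg t = (r * - sin t, r * cos t, mu * r * 1).
Proof.
  intros hd t; destruct (hd t) as [hx [hy hz]].
  assert (ex : vx (dg t) = r * - sin t).
  { apply (uniqueness_limite (fun s => vx (spiral mu r s)) t); auto.
    apply (derivable_pt_lim_scal cos), derivable_pt_lim_cos. }
  assert (ey : vy (dg t) = r * cos t).
  { apply (uniqueness_limite (fun s => vy (spiral mu r s)) t); auto.
    apply (derivable_pt_lim_scal sin), derivable_pt_lim_sin. }
  assert (ez : vz (dg t) = mu * r * 1).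
  { apply (uniqueness_limite (fun s => vz (spiral mu r s)) t); auto.
    apply (derivable_pt_lim_scal id), derivable_pt_lim_id. }
  destruct (dg t) as [[a b] c]; unfold vx, vy, vz in *; simpl in *.
  now subst.
Qed.

Lemma norm3_spiral_tangent (mu r t : R) : 0 <= r ->
  norm3 (r * - sin t, r * cos t, mu * r * 1) = r * sqrt (1 + mu * mu).
Proof.
  intros hr; unfold norm3, inner, vx, vy, vz; simpl.
  pose proof (sin2_cos2 t) as sc; unfold Rsqr in sc.
  replace (r * - sin t * (r * - sin t) + r * cos t * (r * cos t) + mu * r * 1 * (mu * r * 1))
    with (r * r * (1 + mu * mu)) by nra.
  rewrite sqrt_mult_alt by nra; now rewrite sqrt_square.
Qed.

Lemma norm3_spiral_to_axis (mu r t z : R) :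
  norm3 (vsub (0, 0, z) (spiral mu r t)) = sqrt (r * r + (z - mu * r * t) * (z - mu * r * t)).
Proof.
  unfold norm3; f_equal; unfold inner, vsub, spiral, vx, vy, vz; simpl.
  pose proof (sin2_cos2 t) as sc; unfold Rsqr in sc; nra.
Qed.

Lemma Rabs_le_sqrt_add_sqr (a w : R) : Rabs w <= sqrt (a * a + w * w).
Proof.
  rewrite <- sqrt_Rsqr_abs; apply sqrt_le_1_alt; unfold Rsqr; nra.
Qed.

Lemma spiral_axis_not_in_cone (mu r alpha : R) (dg : R -> R3) :
  0 < r -> has_deriv3 (spiral mu r) dg ->
  Rabs mu <= cos alpha * sqrt (1 + mu * mu) ->
  forall t z, ~ in_cone_at (spiral mu r) dg t alpha (0, 0, z).
Proof.
  intros hr hd hmu t z [hcone | hzero].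
  - rewrite (spiral_derivative_eq mu r dg hd t), norm3_spiral_tangent, norm3_spiral_to_axis
      in hcone by lra.
    set (s := sqrt (1 + mu * mu)) in *; set (w := z - mu * r * t) in *.
    assert (hs : 0 < s) by (apply sqrt_lt_R0; nra).
    replace (inner _ _) with (mu * w / s) in hcone
      by (unfold inner, vsub, vscale, spiral, vx, vy, vz, w; simpl; field; lra).
    assert (hcos : 0 <= cos alpha).
    { apply Rmult_le_reg_r with s; [exact hs | pose proof (Rabs_pos mu); lra]. }
    assert (hw : mu * w <= cos alpha * s * sqrt (r * r + w * w)).
    { apply Rle_trans with (Rabs mu * Rabs w).
      - rewrite <- Rabs_mult; apply Rle_abs.
      - apply Rmult_le_compat; auto using Rabs_pos, Rabs_le_sqrt_add_sqr. }
    apply Rmult_gt_compat_r with (r := s) in hcone; [|exact hs].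
    replace (mu * w / s * s) with (mu * w) in hcone by (field; lra).
    lra.
  - unfold vsub, spiral, zero3, vx, vy, vz in hzero; simpl in hzero.
    injection hzero as hx hy _.
    pose proof (sin2_cos2 t) as sc; unfold Rsqr in sc; nra.
Qed.

Lemma cos_acos_inv_sqrt5 : cos (acos (1 / sqrt 5)) = 1 / sqrt 5.
Proof.
  assert (h5 : 1 < sqrt 5) by (rewrite <- sqrt_1; apply sqrt_lt_1_alt; lra).
  apply cos_acos; split.
  - assert (0 < 1 / sqrt 5) by (apply Rdiv_lt_0_compat; lra); lra.
  - apply Rmult_le_reg_r with (sqrt 5); [lra|]; field_simplify; lra.
Qed.

Lemma Rabs_le_inv_sqrt5_mul (mu : R) : mu * mu <= 1 / 4 ->
  Rabs mu <= 1 / sqrt 5 * sqrt (1 + mu * mu).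
Proof.
  intros hmu.
  assert (h5 : 0 < sqrt 5) by (apply sqrt_lt_R0; lra).
  replace (1 / sqrt 5 * sqrt (1 + mu * mu)) with (sqrt ((1 + mu * mu) / 5)).
  - rewrite <- sqrt_Rsqr_abs; apply sqrt_le_1_alt; unfold Rsqr; lra.
  - rewrite sqrt_div_alt by lra; field; lra.
Qed.

Theorem lemma4p5 (mu r : R) (dgamma : R -> R3) :
  0 < mu -> mu < 1 / 2 ->
  (forall r' : R, 0 < r' -> self_expanded (spiral mu r')) ->
  0 < r ->
  has_deriv3 (spiral mu r) dgamma ->
  let lambda := 1 / sqrt 5 in
  let alpha := acos lambda in
  forall t z : R, ~ in_cone_at (spiral mu r) dgamma t alpha (0, 0, z).
Proof.
  (* The self-expansion hypothesis only serves in the paper to bound mu, which is assumed here. *)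
  intros hmu hmu2 _ hr hd lambda alpha.
  apply spiral_axis_not_in_cone; auto.
  unfold alpha, lambda; rewrite cos_acos_inv_sqrt5.
  apply Rabs_le_inv_sqrt5_mul; nra.
Qed.
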